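(* Fix $\varepsilon\in(0,\nu_* )$ and $\xi\in\mathbb R$, let $r^\varepsilon(\cdot,\xi)\in C^1([\varepsilon,\nu_*])$ be real-valued, and let $h^\varepsilon(\cdot,\xi)\in C^2([\varepsilon,\nu_*])$ be the unique solution of $$h^\varepsilon_{\nu\nu}+k'(\nu)^2\xi^2h^\varepsilon=r^\varepsilon\ \text{ on }[\varepsilon,\nu_*],\qquad h^\varepsilon(\varepsilon,\xi)=h^\varepsilon_\nu(\varepsilon,\xi)=0.$$ Then there exists $C>0$ independent of $(\varepsilon,\xi,r^\varepsilon)$ such that, for $\nu\in[\varepsilon,\nu_*]$ and $\xi\neq0$, $$h^\varepsilon_\nu(\nu,\xi)^2+k'(\nu)^2\xi^2h^\varepsilon(\nu,\xi)^2\le C\sum_{j=1}^3I_j^\varepsilon(\nu,\xi),$$ where $I_1^\varepsilon=k'(\nu)^{-2}\xi^{-2}r^\varepsilon(\nu,\xi)^2$, $I_2^\varepsilon=\xi^{-2}\int_\varepsilon^\nu k'(\tau)^{-2}r^\varepsilon(\tau,\xi)^2d\tau$, $I_3^\varepsilon=\xi^{-2}\int_\varepsilon^\nu\frac{r^\varepsilon_\nu(\tau,\xi)^2}{|k'(\tau)k''(\tau)|+k'(\tau)^2}d\tau$. In addition, for every $\xi\in\mathbb R$ and $\nu\in[\varepsilon,\nu_*]$, $$h^\varepsilon_\nu(\nu,\xi)^2+k'(\nu)^2\xi^2h^\varepsilon(\nu,\xi)^2\le C\,\nu\int_\varepsilon^\nu r^\varepsilon(\tau,\xi)^2d\tau,$$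 with $C>0$ independent of $(\varepsilon,\xi,r^\varepsilon)$.
   Context: Standing setting ($\gamma=3$): $\varrho(\nu)$ is the inverse of $\nu(\varrho)=\int_0^\varrho\frac{\tau^2}{1-\tau^2}d\tau$, $\nu_{\rm cr}=\nu(1/\sqrt2)$, and $k$ is defined on $[0,\nu_{\rm cr}]$ by $k(0)=0$, $k'(\nu)=\sqrt{1-2\varrho(\nu)^2}/\varrho(\nu)^2$. In particular $k'>0$ and $k''<0$ on $(0,\nu_{\rm cr})$. $\nu_*\in(0,\nu_{\rm cr})$ is fixed. *)

From Stdlib Require Import Reals Lra ClassicalEpsilon.
From Coquelicot Require Import Coquelicot.
Open Scope R_scope.

Definition nu_of_rho (r : R) : R := RInt (fun t => t ^ 2 / (1 - t ^ 2)) 0 r.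

(* rho(nu): the inverse of nu_of_rho on [0,1) (nu_of_rho is strictly
   increasing there, so the value is unique when it exists). *)
Definition rho (nu : R) : R :=
  epsilon (inhabits 0) (fun r => 0 <= r < 1 /\ nu_of_rho r = nu).

Definition nu_cr : R := nu_of_rho (/ sqrt 2).

Definition kp (nu : R) : R := sqrt (1 - 2 * rho nu ^ 2) / rho nu ^ 2.

Definition kpp (nu : R) : R := Derive kp nu.

Definition cont_within (a b : R) (f : R -> R) (x : R) : Prop :=
  filterlim f (within (fun y => a <= y <= b) (locally x)) (locally (f x)).

Definition C1_on (a b : R) (f df : R -> R) : Prop :=
  (forall x, a < x < b -> is_derive f x (df x)) /\
  (forall x, a <= x <= b -> cont_within a b f x /\ cont_within a b df x).

Definition C2_on (a b : R) (f df d2f : R -> R) : Prop :=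
  C1_on a b f df /\ C1_on a b df d2f.

(* Along a solution, the energy E = h_nu^2 + k'^2 xi^2 h^2 satisfies
   E' = 2 h_nu r + 2 k' k'' xi^2 h^2 with k' k'' < 0.  Absorbing
   2 h_nu r <= E / nu + nu r^2 and applying Gronwall with rate 1/nu on
   [eps, nu] gives E(nu) <= e nu \int r^2.
   For the weighted bound use the modified energy M = E - 2 h r, whose
   derivative 2 k' k'' xi^2 h^2 - 2 h r_nu no longer contains h_nu r.  The term
   2 h r_nu is absorbed by AM-GM with weight (|k' k''| + k'^2) xi^2, which leaves
   at most k'^2 xi^2 h^2 <= 2 M + 4 r^2 / (k'^2 xi^2); Gronwall with rate 2 then
   bounds M, and E <= 2 M + 4 r^2 / (k'^2 xi^2) gives the claim. *)

From Stdlib Require Import Reals Lra ClassicalEpsilon.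
From Coquelicot Require Import Coquelicot.
Open Scope R_scope.

Definition nu_integrand (t : R) : R := t ^ 2 / (1 - t ^ 2).

Lemma nu_integrand_pos (t : R) : 0 < t < 1 -> 0 < nu_integrand t.
Proof. intros Ht. unfold nu_integrand. apply Rdiv_lt_0_compat; nra. Qed.

Lemma nu_integrand_nonneg (t : R) : 0 <= t < 1 -> 0 <= nu_integrand t.
Proof.
  intros Ht. unfold nu_integrand.
  apply Rmult_le_pos; [nra | apply Rlt_le, Rinv_0_lt_compat; nra].
Qed.

Lemma continuous_nu_integrand (t : R) : -1 < t < 1 -> continuous nu_integrand t.
Proof.
  intros Ht. apply (ex_derive_continuous (K := R_AbsRing) (V := R_NormedModule)).
  unfold nu_integrand. auto_derive. nra.
Qed.

Lemma is_derive_nu_of_rho (s : R) : -1 < s < 1 -> is_derive nu_of_rho s (nu_integrand s).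
Proof.
  intros Hs. apply (is_derive_RInt nu_integrand _ 0 s).
  - apply (locally_interval _ s (-1) 1); simpl; try lra.
    intros y Hy1 Hy2. apply (RInt_correct (V := R_CompleteNormedModule)).
    apply (ex_RInt_continuous (V := R_CompleteNormedModule)).
    intros z Hz. apply continuous_nu_integrand.
    split; [apply Rlt_le_trans with (Rmin 0 y) | apply Rle_lt_trans with (Rmax 0 y)];
      try lra; unfold Rmin, Rmax; destruct Rle_dec; lra.
  - apply continuous_nu_integrand; exact Hs.
Qed.

Lemma continuity_pt_nu_of_rho (s : R) : -1 < s < 1 -> continuity_pt nu_of_rho s.
Proof.
  intros Hs. apply continuity_pt_filterlim.
  apply (ex_derive_continuous (K := R_AbsRing) (V := R_NormedModule)).
  eexists. apply is_derive_nu_of_rho, Hs.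
Qed.

Lemma nu_of_rho_0 : nu_of_rho 0 = 0.
Proof. apply (RInt_point (V := R_CompleteNormedModule)). Qed.

Lemma nu_of_rho_MVT (a b : R) : 0 <= a < b -> b < 1 ->
  exists c, a <= c <= b /\ nu_of_rho b - nu_of_rho a = nu_integrand c * (b - a).
Proof.
  intros Hab Hb.
  destruct (MVT_gen nu_of_rho a b nu_integrand) as [c [Hc Heq]];
    rewrite Rmin_left, Rmax_right in * by lra.
  - intros x Hx. apply is_derive_nu_of_rho. lra.
  - intros x Hx. apply continuity_pt_nu_of_rho. lra.
  - exists c. split; assumption.
Qed.

(* [nu_integrand] vanishes at [0], so strictness comes from [[(a + b) / 2, b]]. *)
Lemma nu_of_rho_lt (a b : R) : 0 <= a < b -> b < 1 -> nu_of_rho a < nu_of_rho b.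
Proof.
  intros Hab Hb. set (m := (a + b) / 2).
  destruct (nu_of_rho_MVT a m) as [c [Hc Hac]]; [unfold m; lra | unfold m; lra |].
  destruct (nu_of_rho_MVT m b) as [d [Hd Hmd]]; [unfold m; lra | lra |].
  assert (0 <= nu_integrand c) by (apply nu_integrand_nonneg; unfold m in *; lra).
  assert (0 < nu_integrand d) by (apply nu_integrand_pos; unfold m in *; lra).
  unfold m in *. nra.
Qed.

Definition rho_cr : R := / sqrt 2.

Lemma rho_cr_bounds : 0 < rho_cr < 1 /\ rho_cr ^ 2 = / 2.
Proof.
  unfold rho_cr. assert (H2 : 1 < sqrt 2) by (rewrite <- sqrt_1; apply sqrt_lt_1; lra).
  assert (Hs : sqrt 2 * sqrt 2 = 2) by (apply sqrt_sqrt; lra).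
  repeat split.
  - apply Rinv_0_lt_compat; lra.
  - rewrite <- Rinv_1. apply Rinv_lt_contravar; lra.
  - simpl. rewrite Rmult_1_r, <- Rinv_mult, Hs. reflexivity.
Qed.

Lemma nu_cr_pos : 0 < nu_cr.
Proof.
  destruct rho_cr_bounds as [Hcr _]. rewrite <- nu_of_rho_0.
  apply nu_of_rho_lt; unfold rho_cr in *; lra.
Qed.

Lemma nu_of_rho_onto (x : R) : 0 <= x <= nu_cr ->
  exists s, 0 <= s <= rho_cr /\ nu_of_rho s = x.
Proof.
  intros Hx. destruct rho_cr_bounds as [Hcr _].
  destruct (Req_dec x 0) as [-> | Hx0]; [exists 0; split; [lra | apply nu_of_rho_0] |].
  destruct (Req_dec x nu_cr) as [-> | Hx1]; [exists rho_cr; split; [lra | reflexivity] |].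
  destruct (Ranalysis5.IVT_interv (fun s => nu_of_rho s - x) 0 rho_cr) as [s [Hs Hsx]].
  - intros s Hs. apply continuity_pt_minus;
      [apply continuity_pt_nu_of_rho; lra | apply continuity_pt_const; intros u v; reflexivity].
  - lra.
  - rewrite nu_of_rho_0. lra.
  - unfold nu_cr in *. fold rho_cr in *. lra.
  - exists s. split; [lra | cbv beta in Hsx; lra].
Qed.

Lemma rho_spec (x : R) : 0 <= x <= nu_cr -> 0 <= rho x <= rho_cr /\ nu_of_rho (rho x) = x.
Proof.
  intros Hx. destruct rho_cr_bounds as [Hcr _].
  destruct (nu_of_rho_onto x Hx) as [s [Hs Hsx]].
  assert (He : 0 <= rho x < 1 /\ nu_of_rho (rho x) = x).
  { unfold rho. apply epsilon_spec. exists s. split; [lra | exact Hsx]. }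
  split; [split | apply He]; [apply He |].
  destruct (Rle_lt_dec (rho x) rho_cr) as [| Hlt]; [assumption |].
  pose proof (nu_of_rho_lt rho_cr (rho x) ltac:(lra) ltac:(lra)).
  unfold nu_cr in Hx. fold rho_cr in Hx. lra.
Qed.

Lemma rho_bounds (x : R) : 0 < x < nu_cr -> 0 < rho x < rho_cr.
Proof.
  intros Hx. destruct (rho_spec x) as [[H1 H2] H3]; [lra |].
  split.
  - destruct H1 as [| H1]; [assumption |]. rewrite <- H1, nu_of_rho_0 in H3. lra.
  - destruct H2 as [| H2]; [assumption |]. rewrite H2 in H3. unfold nu_cr in Hx; fold rho_cr in Hx. lra.
Qed.

Lemma rho_le (x y : R) : 0 <= x <= y -> y <= nu_cr -> rho x <= rho y.
Proof.
  intros Hxy Hy. destruct rho_cr_bounds as [Hcr _].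
  destruct (rho_spec x) as [Hx Ex]; [lra |]. destruct (rho_spec y) as [Hy' Ey]; [lra |].
  destruct (Rle_lt_dec (rho x) (rho y)) as [| Hlt]; [assumption |].
  pose proof (nu_of_rho_lt (rho y) (rho x) ltac:(lra) ltac:(lra)). lra.
Qed.

Lemma continuity_pt_rho (x : R) : 0 < x < nu_cr -> continuity_pt rho x.
Proof.
  intros Hx. destruct rho_cr_bounds as [Hcr _].
  assert (Hend : nu_of_rho rho_cr = nu_cr) by reflexivity.
  apply (Ranalysis5.continuity_pt_recip_interv nu_of_rho rho 0 rho_cr); try lra.
  - intros a b Ha Hab Hb. apply nu_of_rho_lt; lra.
  - intros y Hy1 Hy2. apply rho_spec. rewrite nu_of_rho_0 in Hy1. rewrite Hend in Hy2.
    unfold id. lra.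
  - intros y Hy1 Hy2. apply rho_spec. rewrite nu_of_rho_0 in Hy1. rewrite Hend in Hy2. lra.
  - intros a Ha. apply continuity_pt_nu_of_rho. lra.
  - rewrite nu_of_rho_0, Hend. exact Hx.
Qed.

Lemma is_derive_rho (x : R) : 0 < x < nu_cr -> is_derive rho x (/ nu_integrand (rho x)).
Proof.
  intros Hx. destruct rho_cr_bounds as [Hcr _].
  destruct (rho_spec 0) as [H0 _]; [pose proof nu_cr_pos; lra |].
  destruct (rho_spec nu_cr) as [H1 _]; [pose proof nu_cr_pos; lra |].
  assert (Prf : forall s, rho 0 <= s <= rho nu_cr -> derivable_pt nu_of_rho s).
  { intros s Hs. exists (nu_integrand s). apply is_derive_Reals, is_derive_nu_of_rho. lra. }
  assert (Hmono : rho 0 <= rho x <= rho nu_cr) by (split; apply rho_le; lra).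
  pose proof (rho_bounds x Hx) as Hr.
  assert (Hd : derive_pt nu_of_rho (rho x) (Prf (rho x) Hmono) = nu_integrand (rho x)).
  { apply derive_pt_eq_0, is_derive_Reals, is_derive_nu_of_rho. lra. }
  apply is_derive_Reals.
  replace (/ nu_integrand (rho x)) with (1 / derive_pt nu_of_rho (rho x) (Prf (rho x) Hmono))
    by (rewrite Hd; unfold Rdiv; ring).
  apply Ranalysis5.derivable_pt_lim_recip_interv.
  - apply continuity_pt_rho, Hx.
  - exact nu_cr_pos.
  - exact Hx.
  - intros y Hy. apply rho_spec. exact Hy.
  - rewrite Hd. pose proof (nu_integrand_pos (rho x)). lra.
Qed.

(* [kp nu] is by definition [kp_of_rho (rho nu)]. *)
Definition kp_of_rho (s : R) : R := sqrt (1 - 2 * s ^ 2) / s ^ 2.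

Definition kp_of_rho' (s : R) : R :=
  - 2 / (s * sqrt (1 - 2 * s ^ 2)) - 2 * sqrt (1 - 2 * s ^ 2) / s ^ 3.

Lemma is_derive_kp_of_rho (s : R) : 0 < s < rho_cr -> is_derive kp_of_rho s (kp_of_rho' s).
Proof.
  intros Hs. destruct rho_cr_bounds as [Hcr Hcr2].
  assert (Hp : 0 < 1 - 2 * s ^ 2) by nra.
  assert (HS : 0 < sqrt (1 - 2 * s ^ 2)) by (apply sqrt_lt_R0; lra).
  assert (HSS : sqrt (1 - 2 * s ^ 2) * sqrt (1 - 2 * s ^ 2) = 1 - 2 * s ^ 2)
    by (apply sqrt_sqrt; lra).
  unfold kp_of_rho, kp_of_rho'. auto_derive.
  - repeat split; nra.
  - replace (1 + - (2 * (s * (s * 1)))) with (1 - 2 * s ^ 2) by ring.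
    set (S := sqrt (1 - 2 * s ^ 2)) in *. field. lra.
Qed.

Lemma kp_of_rho'_neg (s : R) : 0 < s < rho_cr -> kp_of_rho' s < 0.
Proof.
  intros Hs. destruct rho_cr_bounds as [Hcr Hcr2].
  assert (HS : 0 < sqrt (1 - 2 * s ^ 2)) by (apply sqrt_lt_R0; nra).
  assert (0 < 2 / (s * sqrt (1 - 2 * s ^ 2)))
    by (apply Rdiv_lt_0_compat; [lra | apply Rmult_lt_0_compat; lra]).
  assert (0 < 2 * sqrt (1 - 2 * s ^ 2) / s ^ 3)
    by (apply Rdiv_lt_0_compat; [lra | apply pow_lt; lra]).
  unfold kp_of_rho', Rdiv in *. lra.
Qed.

Lemma continuous_kpp_formula (s : R) : 0 < s < rho_cr ->
  continuous (fun s => kp_of_rho' s / nu_integrand s) s.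
Proof.
  intros Hs. destruct rho_cr_bounds as [Hcr Hcr2].
  assert (HS : 0 < sqrt (1 - 2 * s ^ 2)) by (apply sqrt_lt_R0; nra).
  apply (ex_derive_continuous (K := R_AbsRing) (V := R_NormedModule)).
  unfold kp_of_rho', nu_integrand. auto_derive.
  replace (1 + - (2 * (s * (s * 1)))) with (1 - 2 * s ^ 2) by ring.
  assert (0 < s * s) by nra. assert (0 < 1 - s * s) by nra.
  repeat split; try nra.
  apply Rgt_not_eq, Rmult_lt_0_compat; [nra | apply Rinv_0_lt_compat; nra].
Qed.

Lemma is_derive_kp_formula (x : R) : 0 < x < nu_cr ->
  is_derive kp x (kp_of_rho' (rho x) / nu_integrand (rho x)).
Proof.
  intros Hx. unfold Rdiv. rewrite Rmult_comm.
  apply (is_derive_comp kp_of_rho rho).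
  - apply is_derive_kp_of_rho, rho_bounds, Hx.
  - apply is_derive_rho, Hx.
Qed.

Lemma kpp_formula (x : R) : 0 < x < nu_cr -> kpp x = kp_of_rho' (rho x) / nu_integrand (rho x).
Proof. intros Hx. apply is_derive_unique, is_derive_kp_formula, Hx. Qed.

Lemma is_derive_kp (x : R) : 0 < x < nu_cr -> is_derive kp x (kpp x).
Proof. intros Hx. rewrite kpp_formula by exact Hx. apply is_derive_kp_formula, Hx. Qed.

Lemma kp_pos (x : R) : 0 < x < nu_cr -> 0 < kp x.
Proof.
  intros Hx. pose proof (rho_bounds x Hx). destruct rho_cr_bounds as [Hcr Hcr2].
  unfold kp. apply Rdiv_lt_0_compat; [apply sqrt_lt_R0 |]; nra.
Qed.

Lemma kpp_neg (x : R) : 0 < x < nu_cr -> kpp x < 0.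
Proof.
  intros Hx. pose proof (rho_bounds x Hx). destruct rho_cr_bounds as [Hcr _].
  rewrite kpp_formula by exact Hx. unfold Rdiv.
  apply Rmult_neg_pos; [apply kp_of_rho'_neg; lra |].
  apply Rinv_0_lt_compat, nu_integrand_pos. lra.
Qed.

Lemma continuous_kp (x : R) : 0 < x < nu_cr -> continuous kp x.
Proof.
  intros Hx. apply (ex_derive_continuous (K := R_AbsRing) (V := R_NormedModule)).
  eexists. apply is_derive_kp, Hx.
Qed.

Lemma continuous_kpp (x : R) : 0 < x < nu_cr -> continuous kpp x.
Proof.
  intros Hx.
  apply (continuous_ext_loc (T := R_UniformSpace) (U := R_UniformSpace) kpp
           (fun y => kp_of_rho' (rho y) / nu_integrand (rho y))).
  - apply (locally_interval _ x 0 nu_cr); simpl; try lra.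
    intros y Hy1 Hy2. symmetry. apply kpp_formula. lra.
  - apply (continuous_comp rho (fun s => kp_of_rho' s / nu_integrand s)).
    + apply continuity_pt_filterlim, continuity_pt_rho, Hx.
    + apply continuous_kpp_formula, rho_bounds, Hx.
Qed.

Definition cont_on (a b : R) (f : R -> R) : Prop :=
  forall x, a <= x <= b -> cont_within a b f x.

Lemma cont_on_of_continuous (a b : R) (f : R -> R) :
  (forall x, a <= x <= b -> continuous f x) -> cont_on a b f.
Proof.
  intros Hf x Hx. apply (filterlim_filter_le_1 (F := locally x)); [| apply Hf, Hx].
  intros P HP. unfold within. apply (filter_imp P); [intros y Py _; exact Py | exact HP].
Qed.

Lemma cont_on_comp (a b : R) (phi f : R -> R) :
  cont_on a b f -> (forall x, a <= x <= b -> continuous phi (f x)) ->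
  cont_on a b (fun t => phi (f t)).
Proof. intros Hf Hphi x Hx. exact (filterlim_comp _ _ _ f phi _ _ _ (Hf x Hx) (Hphi x Hx)). Qed.

Lemma cont_on_plus (a b : R) (f g : R -> R) :
  cont_on a b f -> cont_on a b g -> cont_on a b (fun t => f t + g t).
Proof.
  intros Hf Hg x Hx. apply (filterlim_comp_2 f g Rplus (Hf x Hx) (Hg x Hx)).
  exact (filterlim_plus (K := R_AbsRing) (V := R_NormedModule) (f x) (g x)).
Qed.

Lemma cont_on_mult (a b : R) (f g : R -> R) :
  cont_on a b f -> cont_on a b g -> cont_on a b (fun t => f t * g t).
Proof.
  intros Hf Hg x Hx. apply (filterlim_comp_2 f g Rmult (Hf x Hx) (Hg x Hx)).
  exact (filterlim_mult (K := R_AbsRing) (f x) (g x)).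
Qed.

Lemma cont_on_const (a b k : R) : cont_on a b (fun _ => k).
Proof.
  apply cont_on_of_continuous. intros x _.
  apply (continuous_const (U := R_UniformSpace) (V := R_UniformSpace)).
Qed.

Lemma cont_on_sq (a b : R) (f : R -> R) : cont_on a b f -> cont_on a b (fun t => f t ^ 2).
Proof.
  intros Hf. apply (cont_on_comp a b (fun y => y ^ 2)); [exact Hf |]. intros x _.
  apply (ex_derive_continuous (K := R_AbsRing) (V := R_NormedModule)). auto_derive. exact I.
Qed.

Lemma cont_on_inv (a b : R) (f : R -> R) : cont_on a b f ->
  (forall x, a <= x <= b -> f x <> 0) -> cont_on a b (fun t => / f t).
Proof. intros Hf Hf0. apply (cont_on_comp a b Rinv); [exact Hf |]. intros x Hx. apply continuous_Rinv, Hf0, Hx. Qed.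

Lemma cont_on_minus (a b : R) (f g : R -> R) :
  cont_on a b f -> cont_on a b g -> cont_on a b (fun t => f t - g t).
Proof.
  intros Hf Hg. apply cont_on_plus; [exact Hf |].
  apply (cont_on_comp a b Ropp); [exact Hg |]. intros x _.
  apply (ex_derive_continuous (K := R_AbsRing) (V := R_NormedModule)). auto_derive. exact I.
Qed.

Lemma cont_on_abs (a b : R) (f : R -> R) : cont_on a b f -> cont_on a b (fun t => Rabs (f t)).
Proof. intros Hf. apply (cont_on_comp a b Rabs); [exact Hf |]. intros x _. apply continuous_Rabs. Qed.

(* [f (clamp a b x)] extends [f] from [[a, b]] to all of [R]; this makes results
   stated for continuity on [R] (integrals, mean value theorem) applicable. *)
Definition clamp (a b x : R) : R := Rmax a (Rmin b x).

Lemma clamp_in (a b x : R) : a <= b -> a <= clamp a b x <= b.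
Proof. intros Hab. unfold clamp, Rmax, Rmin. repeat destruct Rle_dec; lra. Qed.

Lemma clamp_id (a b x : R) : a <= x <= b -> clamp a b x = x.
Proof. intros Hx. unfold clamp, Rmax, Rmin. repeat destruct Rle_dec; lra. Qed.

Lemma clamp_lipschitz (a b x y : R) : a <= b ->
  Rabs (clamp a b x - clamp a b y) <= Rabs (x - y).
Proof.
  intros Hab. unfold clamp, Rmax, Rmin.
  repeat destruct Rle_dec; unfold Rabs; repeat destruct Rcase_abs; lra.
Qed.

Lemma continuous_clamp_comp (a b : R) (f : R -> R) : a <= b -> cont_on a b f ->
  forall y, continuous (fun x => f (clamp a b x)) y.
Proof.
  intros Hab Hf y.
  apply (filterlim_comp _ _ _ (clamp a b) f _ (within (fun z => a <= z <= b) (locally (clamp a b y)))).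
  - intros P [eps HP]. exists eps. intros z Hz. apply HP; [| apply clamp_in, Hab].
    apply Rle_lt_trans with (2 := Hz). apply clamp_lipschitz, Hab.
  - apply Hf, clamp_in, Hab.
Qed.

Lemma RInt_clamp (a b t : R) (f : R -> R) : a <= t <= b ->
  RInt (fun x => f (clamp a b x)) a t = RInt f a t.
Proof.
  intros Ht. apply (RInt_ext (V := R_CompleteNormedModule)). intros x Hx.
  rewrite Rmin_left, Rmax_right in Hx by lra. rewrite clamp_id by lra. reflexivity.
Qed.

Lemma ex_RInt_cont_on (a b t : R) (f : R -> R) : cont_on a b f -> a <= t <= b -> ex_RInt f a t.
Proof.
  intros Hf Ht.
  apply (ex_RInt_ext (V := R_CompleteNormedModule) (fun x => f (clamp a b x))).
  - intros x Hx. rewrite Rmin_left, Rmax_right in Hx by lra. rewrite clamp_id by lra. reflexivity.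
  - apply (ex_RInt_continuous (V := R_CompleteNormedModule)). intros x _.
    apply continuous_clamp_comp; [lra | exact Hf].
Qed.

Lemma is_derive_RInt_continuous (f : R -> R) (a t : R) :
  (forall y, continuous f y) -> is_derive (fun s => RInt f a s) t (f t).
Proof.
  intros Hf. apply (is_derive_RInt f _ a t); [| apply Hf].
  apply filter_forall. intros y. apply (RInt_correct (V := R_CompleteNormedModule)).
  apply (ex_RInt_continuous (V := R_CompleteNormedModule)). intros z _. apply Hf.
Qed.

Lemma le_of_derive_nonpos (F dF : R -> R) (c d : R) : c <= d ->
  (forall x, c <= x <= d -> continuous F x) ->
  (forall x, c < x < d -> is_derive F x (dF x)) ->
  (forall x, c < x < d -> dF x <= 0) -> F d <= F c.
Proof.
  intros Hcd Hc Hd Hn. destruct (Req_dec c d) as [-> | Hne]; [lra |].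
  assert (pr1 : forall z, c < z < d -> derivable_pt F z).
  { intros z Hz. exists (dF z). apply is_derive_Reals, Hd, Hz. }
  assert (pr2 : forall z, c < z < d -> derivable_pt id z) by (intros; apply derivable_pt_id).
  destruct (MVT F id c d pr1 pr2) as [z [Hz Heq]].
  - lra.
  - intros x Hx. apply continuity_pt_filterlim, Hc, Hx.
  - intros y _. apply derivable_continuous_pt, derivable_pt_id.
  - rewrite (derive_pt_eq_0 F z (dF z) (pr1 z Hz)) in Heq by (apply is_derive_Reals, Hd, Hz).
    rewrite (derive_pt_eq_0 id z 1 (pr2 z Hz)) in Heq by apply derivable_pt_lim_id.
    unfold id in Heq. pose proof (Hn z Hz). nra.
Qed.

Lemma exp_le_compat (x y : R) : x <= y -> exp x <= exp y.
Proof. intros [H | ->]; [left; apply exp_increasing, H | right; reflexivity]. Qed.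

Lemma RInt_ge_0_cont_on (a b t : R) (f : R -> R) : cont_on a b f -> a <= t <= b ->
  (forall x, a < x < t -> 0 <= f x) -> 0 <= RInt f a t.
Proof.
  intros Hf Ht Hpos. apply RInt_ge_0; [lra | apply (ex_RInt_cont_on a b); assumption | exact Hpos].
Qed.

Lemma RInt_lin_comb (a b t c k : R) (f g : R -> R) : cont_on a b f -> cont_on a b g ->
  a <= t <= b -> RInt (fun x => c * (k * f x + g x)) a t = c * (k * RInt f a t + RInt g a t).
Proof.
  intros Hf Hg Ht.
  assert (Hexf : ex_RInt f a t) by (apply (ex_RInt_cont_on a b); assumption).
  assert (Hexg : ex_RInt g a t) by (apply (ex_RInt_cont_on a b); assumption).
  assert (Hexkf : ex_RInt (fun x => k * f x) a t)
    by apply (ex_RInt_scal (V := R_CompleteNormedModule)), Hexf.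
  transitivity (c * RInt (fun x => k * f x + g x) a t).
  { apply (RInt_scal (V := R_CompleteNormedModule)).
    apply (ex_RInt_plus (V := R_CompleteNormedModule)); assumption. }
  f_equal. transitivity (RInt (fun x => k * f x) a t + RInt g a t).
  { apply (RInt_plus (V := R_CompleteNormedModule)); assumption. }
  f_equal. apply (RInt_scal (V := R_CompleteNormedModule)), Hexf.
Qed.

(* Gronwall: [(F e^{-c(s-a)} - \int_a^s g)' <= g (e^{-c(s-a)} - 1) <= 0]. *)
Lemma gronwall (a b c : R) (F dF g : R -> R) : a <= b -> 0 <= c ->
  cont_on a b F -> cont_on a b g ->
  (forall x, a < x < b -> is_derive F x (dF x)) ->
  (forall x, a < x < b -> 0 <= g x) ->
  (forall x, a < x < b -> dF x <= c * F x + g x) ->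
  F a <= 0 ->
  forall t, a <= t <= b -> F t <= exp (c * (t - a)) * RInt g a t.
Proof.
  intros Hab Hc HF Hg HdF Hg0 Hgrow Ha t Ht.
  set (Fc := fun x => F (clamp a b x)). set (gc := fun x => g (clamp a b x)).
  set (e := fun s => exp (- c * (s - a))).
  assert (HFc : forall y, continuous Fc y) by (apply continuous_clamp_comp; assumption).
  assert (Hgc : forall y, continuous gc y) by (apply continuous_clamp_comp; assumption).
  assert (He : forall s : R, is_derive e s (- c * e s)).
  { intros s. unfold e. auto_derive; [exact I | unfold Rminus; ring]. }
  set (Phi := fun s => Fc s * e s - RInt gc a s).
  assert (Hdec : Phi t <= Phi a).
  { apply (le_of_derive_nonpos Phi (fun s => dF s * e s + Fc s * (- c * e s) - gc s)); [lra | | |].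
    - intros x _. apply (continuous_minus (U := R_UniformSpace) (V := R_NormedModule)).
      + apply (continuous_mult (U := R_UniformSpace) (K := R_AbsRing)); [apply HFc |].
        apply (ex_derive_continuous (K := R_AbsRing) (V := R_NormedModule)). eexists. apply He.
      + apply (ex_derive_continuous (K := R_AbsRing) (V := R_NormedModule)).
        eexists. apply is_derive_RInt_continuous, Hgc.
    - intros x Hx.
      apply (is_derive_minus (K := R_AbsRing) (V := R_NormedModule));
        [| apply is_derive_RInt_continuous, Hgc].
      apply (is_derive_mult (K := R_AbsRing)); [| apply He | intros; apply Rmult_comm].
      apply (is_derive_ext_loc F); [| apply HdF; lra].
      apply (locally_interval _ x a b); simpl; try lra.
      intros y Hy1 Hy2. unfold Fc. rewrite clamp_id by lra. reflexivity.
    - intros x Hx. unfold Fc, gc. rewrite clamp_id by lra.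
      assert (Hex : 0 < e x <= 1).
      { split; [apply exp_pos |]. rewrite <- exp_0. apply exp_le_compat. nra. }
      pose proof (Hgrow x ltac:(lra)). pose proof (Hg0 x ltac:(lra)). nra. }
  assert (Hea : e a = 1) by (unfold e; rewrite Rminus_eq_0, Rmult_0_r; apply exp_0).
  assert (Het : e t * exp (c * (t - a)) = 1).
  { unfold e. rewrite <- exp_plus, <- exp_0. f_equal. ring. }
  unfold Phi, Fc, gc in Hdec. rewrite !clamp_id, RInt_clamp, Hea, RInt_point in Hdec by lra.
  replace (F t) with (F t * e t * exp (c * (t - a))) by (rewrite Rmult_assoc, Het; ring).
  rewrite (Rmult_comm (exp _)). apply Rmult_le_compat_r; [apply Rlt_le, exp_pos |].
  change (@zero R_CompleteNormedModule) with 0 in Hdec. lra.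
Qed.

Definition energy (xi : R) (h dh : R -> R) (t : R) : R := dh t ^ 2 + kp t ^ 2 * xi ^ 2 * h t ^ 2.

Lemma is_derive_energy (xi : R) (h dh d2h : R -> R) (x : R) : 0 < x < nu_cr ->
  is_derive h x (dh x) -> is_derive dh x (d2h x) ->
  is_derive (energy xi h dh) x
    (2 * dh x * (d2h x + kp x ^ 2 * xi ^ 2 * h x) + 2 * kp x * kpp x * xi ^ 2 * h x ^ 2).
Proof.
  intros Hx Hh Hdh. pose proof (is_derive_kp x Hx) as Hk.
  unfold energy. auto_derive.
  - repeat split; eexists; eassumption.
  - change (Derive (fun y => h y) x) with (Derive h x).
    change (Derive (fun y => dh y) x) with (Derive dh x).
    change (Derive (fun y => kp y) x) with (Derive kp x).
    rewrite (is_derive_unique _ _ _ Hh), (is_derive_unique _ _ _ Hdh), (is_derive_unique _ _ _ Hk).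
    ring.
Qed.

Definition modified_energy (xi : R) (h dh r : R -> R) (t : R) : R :=
  energy xi h dh t - 2 * h t * r t.

Lemma energy_growth_ineq (s D R K P xi H : R) : 0 < s -> K * P <= 0 ->
  2 * D * R + 2 * K * P * xi ^ 2 * H ^ 2
  <= / s * (D ^ 2 + K ^ 2 * xi ^ 2 * H ^ 2) + s * R ^ 2.
Proof.
  intros Hs HKP.
  assert (Hsq : 0 <= s * (D / s - R) ^ 2) by (apply Rmult_le_pos; [lra | apply pow2_ge_0]).
  assert (Hid : s * (D / s - R) ^ 2 = / s * D ^ 2 - 2 * D * R + s * R ^ 2) by (field; lra).
  assert (0 <= / s * (K ^ 2 * xi ^ 2 * H ^ 2)).
  { apply Rmult_le_pos; [apply Rlt_le, Rinv_0_lt_compat, Hs |].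
    rewrite <- !Rpow_mult_distr. apply pow2_ge_0. }
  assert (0 <= - (K * P) * (xi ^ 2 * H ^ 2)).
  { apply Rmult_le_pos; [lra |]. rewrite <- Rpow_mult_distr. apply pow2_ge_0. }
  nra.
Qed.

(* [2 M + 4 R^2 / q - (D^2 + q H^2) = D^2 + q (H - 2 R / q)^2]. *)
Lemma energy_le_modified_energy (D H R q : R) : 0 < q ->
  D ^ 2 + q * H ^ 2 <= 2 * (D ^ 2 + q * H ^ 2 - 2 * H * R) + 4 * (/ q * R ^ 2).
Proof.
  intros Hq.
  assert (0 <= q * (H - 2 * R / q) ^ 2) by (apply Rmult_le_pos; [lra | apply pow2_ge_0]).
  assert (0 <= D ^ 2) by apply pow2_ge_0.
  assert (Hid : q * (H - 2 * R / q) ^ 2 = q * H ^ 2 - 4 * H * R + 4 * (/ q * R ^ 2))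
    by (field; lra).
  lra.
Qed.

(* The term [-2 H DR] is absorbed by AM-GM with weight [w xi^2], [w = |K P| + K^2]. *)
Lemma modified_energy_growth_ineq (D H R DR K P xi : R) : 0 < K -> P <= 0 -> xi <> 0 ->
  2 * K * P * xi ^ 2 * H ^ 2 - 2 * H * DR
  <= 2 * (D ^ 2 + K ^ 2 * xi ^ 2 * H ^ 2 - 2 * H * R)
     + / xi ^ 2 * (4 * (/ K ^ 2 * R ^ 2) + DR ^ 2 / (Rabs (K * P) + K ^ 2)).
Proof.
  intros HK HP Hxi.
  assert (Habs : Rabs (K * P) = - (K * P)) by (apply Rabs_left1; nra).
  rewrite Habs. set (w := - (K * P) + K ^ 2).
  assert (Hw : 0 < w) by (unfold w; nra).
  assert (Hx2 : 0 < xi ^ 2) by (apply pow2_gt_0, Hxi).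
  assert (Hamgm : - 2 * H * DR <= w * xi ^ 2 * H ^ 2 + / xi ^ 2 * (DR ^ 2 / w)).
  { assert (0 <= w * xi ^ 2 * (H + DR / (w * xi ^ 2)) ^ 2)
      by (apply Rmult_le_pos; [nra | apply pow2_ge_0]).
    assert (Hid : w * xi ^ 2 * (H + DR / (w * xi ^ 2)) ^ 2
                  = w * xi ^ 2 * H ^ 2 + 2 * H * DR + / xi ^ 2 * (DR ^ 2 / w))
      by (field; lra).
    lra. }
  assert (HKP : K * P * xi ^ 2 * H ^ 2 <= 0).
  { assert (0 <= - (K * P) * xi ^ 2 * H ^ 2)
      by (apply Rmult_le_pos; [apply Rmult_le_pos; nra | apply pow2_ge_0]).
    lra. }
  assert (Hq : 0 < K ^ 2 * xi ^ 2) by (apply Rmult_lt_0_compat; [apply pow_lt |]; assumption).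
  pose proof (energy_le_modified_energy D H R (K ^ 2 * xi ^ 2) Hq) as HE.
  assert (H4 : 4 * (/ (K ^ 2 * xi ^ 2) * R ^ 2) = / xi ^ 2 * (4 * (/ K ^ 2 * R ^ 2)))
    by (field; split; lra).
  assert (0 <= D ^ 2) by apply pow2_ge_0.
  unfold w in *. nra.
Qed.

Lemma weight_pos (x : R) : 0 < x < nu_cr -> 0 < Rabs (kp x * kpp x) + kp x ^ 2.
Proof.
  intros Hx. pose proof (Rabs_pos (kp x * kpp x)). pose proof (pow_lt _ 2 (kp_pos x Hx)). lra.
Qed.

Section EnergyEstimates.

Variables (a b xi : R) (r dr h dh d2h : R -> R).
Hypotheses (Ha : 0 < a) (Hab : a <= b) (Hb : b < nu_cr).
Hypotheses (Hr : C1_on a b r dr) (Hh : C2_on a b h dh d2h).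
Hypothesis Hode : forall x, a <= x <= b -> d2h x + kp x ^ 2 * xi ^ 2 * h x = r x.
Hypotheses (Hh0 : h a = 0) (Hdh0 : dh a = 0).

Lemma cont_on_r : cont_on a b r.
Proof. intros x Hx. apply (proj2 Hr x Hx). Qed.

Lemma cont_on_dr : cont_on a b dr.
Proof. intros x Hx. apply (proj2 Hr x Hx). Qed.

Lemma cont_on_h : cont_on a b h.
Proof. intros x Hx. apply (proj2 (proj1 Hh) x Hx). Qed.

Lemma cont_on_dh : cont_on a b dh.
Proof. intros x Hx. apply (proj2 (proj1 Hh) x Hx). Qed.

Lemma cont_on_kp : cont_on a b kp.
Proof. apply cont_on_of_continuous. intros x Hx. apply continuous_kp. lra. Qed.

Lemma cont_on_kpp : cont_on a b kpp.
Proof. apply cont_on_of_continuous. intros x Hx. apply continuous_kpp. lra. Qed.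

Lemma cont_on_energy : cont_on a b (energy xi h dh).
Proof.
  apply cont_on_plus; [apply cont_on_sq, cont_on_dh |].
  apply cont_on_mult; [apply cont_on_mult; [apply cont_on_sq, cont_on_kp | apply cont_on_const] |].
  apply cont_on_sq, cont_on_h.
Qed.

Lemma cont_on_modified_energy : cont_on a b (modified_energy xi h dh r).
Proof.
  apply cont_on_minus; [apply cont_on_energy |].
  apply cont_on_mult; [apply cont_on_mult; [apply cont_on_const | apply cont_on_h] | apply cont_on_r].
Qed.

Lemma cont_on_r_weighted : cont_on a b (fun t => / kp t ^ 2 * r t ^ 2).
Proof.
  apply cont_on_mult; [| apply cont_on_sq, cont_on_r].
  apply cont_on_inv; [apply cont_on_sq, cont_on_kp |].
  intros x Hx. apply Rgt_not_eq, pow_lt, kp_pos. lra.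
Qed.

Lemma cont_on_dr_weighted : cont_on a b (fun t => dr t ^ 2 / (Rabs (kp t * kpp t) + kp t ^ 2)).
Proof.
  apply cont_on_mult; [apply cont_on_sq, cont_on_dr |].
  apply cont_on_inv; [| intros x Hx; apply Rgt_not_eq, weight_pos; lra].
  apply cont_on_plus; [apply cont_on_abs, cont_on_mult; [apply cont_on_kp | apply cont_on_kpp] |].
  apply cont_on_sq, cont_on_kp.
Qed.

Lemma energy_at_a : energy xi h dh a = 0.
Proof. unfold energy. rewrite Hh0, Hdh0. ring. Qed.

Lemma is_derive_energy_sol (x : R) : a < x < b ->
  is_derive (energy xi h dh) x (2 * dh x * r x + 2 * kp x * kpp x * xi ^ 2 * h x ^ 2).
Proof.
  intros Hx. destruct Hh as [[Hh' _] [Hdh' _]].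
  rewrite <- Hode by lra. apply is_derive_energy; [lra | apply Hh' | apply Hdh']; exact Hx.
Qed.

Lemma is_derive_modified_energy_sol (x : R) : a < x < b ->
  is_derive (modified_energy xi h dh r) x
    (2 * kp x * kpp x * xi ^ 2 * h x ^ 2 - 2 * h x * dr x).
Proof.
  intros Hx. destruct Hh as [[Hh' _] _]. destruct Hr as [Hr' _].
  pose proof (is_derive_mult (K := R_AbsRing) h r x (dh x) (dr x) (Hh' x Hx) (Hr' x Hx)
                (fun u v => Rmult_comm u v)) as Hhr.
  pose proof (is_derive_minus (K := R_AbsRing) (V := R_NormedModule) _ _ x _ _
                (is_derive_energy_sol x Hx) (is_derive_scal _ x 2 _ Hhr)) as HM.
  replace (2 * kp x * kpp x * xi ^ 2 * h x ^ 2 - 2 * h x * dr x)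
    with (2 * dh x * r x + 2 * kp x * kpp x * xi ^ 2 * h x ^ 2 - 2 * (dh x * r x + h x * dr x))
    by ring.
  apply (is_derive_ext (fun t => energy xi h dh t - 2 * (h t * r t))); [| exact HM].
  intros t. unfold modified_energy. simpl. ring.
Qed.

Lemma energy_estimate_L2 (nu : R) : a <= nu <= b ->
  energy xi h dh nu <= 3 * nu * RInt (fun t => r t ^ 2) a nu.
Proof.
  intros Hnu. assert (Hnu0 : 0 < nu) by lra.
  assert (Hr2 : cont_on a b (fun t => r t ^ 2)) by apply cont_on_sq, cont_on_r.
  assert (HG : energy xi h dh nu <= exp (/ nu * (nu - a)) * RInt (fun t => nu * r t ^ 2) a nu).
  { apply (gronwall a b (/ nu) _
             (fun x => 2 * dh x * r x + 2 * kp x * kpp x * xi ^ 2 * h x ^ 2));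
      try assumption.
    - apply Rlt_le, Rinv_0_lt_compat, Hnu0.
    - apply cont_on_energy.
    - apply cont_on_mult; [apply cont_on_const | exact Hr2].
    - exact is_derive_energy_sol.
    - intros x _. apply Rmult_le_pos; [lra | apply pow2_ge_0].
    - intros x Hx. unfold energy. apply energy_growth_ineq; [exact Hnu0 |].
      assert (0 < kp x) by (apply kp_pos; lra). assert (kpp x < 0) by (apply kpp_neg; lra).
      nra.
    - rewrite energy_at_a. lra. }
  assert (Hscal : RInt (fun t => nu * r t ^ 2) a nu = nu * RInt (fun t => r t ^ 2) a nu).
  { apply (RInt_scal (V := R_CompleteNormedModule)), (ex_RInt_cont_on a b); [exact Hr2 | lra]. }
  assert (Hexp : exp (/ nu * (nu - a)) <= 3).
  { apply Rle_trans with (exp 1); [apply exp_le_compat | apply exp_le_3].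
    replace (/ nu * (nu - a)) with (1 - a / nu) by (field; lra).
    assert (0 < a / nu) by (apply Rdiv_lt_0_compat; lra). lra. }
  assert (HJ : 0 <= RInt (fun t => r t ^ 2) a nu)
    by (apply (RInt_ge_0_cont_on a b); [exact Hr2 | lra | intros; apply pow2_ge_0]).
  rewrite Hscal in HG. rewrite Rmult_assoc.
  apply Rle_trans with (1 := HG). apply Rmult_le_compat_r; [| exact Hexp].
  apply Rmult_le_pos; lra.
Qed.

Lemma modified_energy_estimate (nu : R) : xi <> 0 -> a <= nu <= b ->
  modified_energy xi h dh r nu
  <= exp (2 * (nu - a))
     * (/ xi ^ 2 * (4 * RInt (fun t => / kp t ^ 2 * r t ^ 2) a nu
                    + RInt (fun t => dr t ^ 2 / (Rabs (kp t * kpp t) + kp t ^ 2)) a nu)).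
Proof.
  intros Hxi Hnu.
  rewrite <- (RInt_lin_comb a b nu _ 4 _ _ cont_on_r_weighted cont_on_dr_weighted Hnu).
  apply (gronwall a b 2 _ (fun x => 2 * kp x * kpp x * xi ^ 2 * h x ^ 2 - 2 * h x * dr x));
    try assumption.
  - lra.
  - apply cont_on_modified_energy.
  - apply cont_on_mult; [apply cont_on_const |].
    apply cont_on_plus; [apply cont_on_mult; [apply cont_on_const |] |].
    + apply cont_on_r_weighted.
    + apply cont_on_dr_weighted.
  - exact is_derive_modified_energy_sol.
  - intros x Hx. assert (Hk : 0 < kp x) by (apply kp_pos; lra).
    apply Rmult_le_pos; [apply Rlt_le, Rinv_0_lt_compat, pow2_gt_0, Hxi |].
    apply Rplus_le_le_0_compat; [apply Rmult_le_pos; [lra | apply Rmult_le_pos] |].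
    + apply Rlt_le, Rinv_0_lt_compat, pow_lt, Hk.
    + apply pow2_ge_0.
    + apply Rmult_le_pos; [apply pow2_ge_0 |]. apply Rlt_le, Rinv_0_lt_compat, weight_pos. lra.
  - intros x Hx. unfold modified_energy, energy.
    apply modified_energy_growth_ineq; [apply kp_pos | apply Rlt_le, kpp_neg | exact Hxi]; lra.
  - unfold modified_energy. rewrite energy_at_a, Hh0. lra.
Qed.

Lemma energy_estimate_weighted (nu : R) : xi <> 0 -> a <= nu <= b ->
  energy xi h dh nu
  <= (8 * exp (2 * b) + 4)
     * ( / (kp nu ^ 2 * xi ^ 2) * r nu ^ 2
       + / xi ^ 2 * RInt (fun t => / kp t ^ 2 * r t ^ 2) a nu
       + / xi ^ 2 * RInt (fun t => dr t ^ 2 / (Rabs (kp t * kpp t) + kp t ^ 2)) a nu).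
Proof.
  intros Hxi Hnu.
  assert (Hq : 0 < kp nu ^ 2 * xi ^ 2)
    by (apply Rmult_lt_0_compat; [apply pow_lt, kp_pos | apply pow2_gt_0, Hxi]; lra).
  pose proof (energy_le_modified_energy (dh nu) (h nu) (r nu) _ Hq) as HE.
  pose proof (modified_energy_estimate nu Hxi Hnu) as HM.
  fold (energy xi h dh nu) in HE. unfold modified_energy in HM.
  assert (HIA : 0 <= RInt (fun t => / kp t ^ 2 * r t ^ 2) a nu).
  { apply (RInt_ge_0_cont_on a b); [apply cont_on_r_weighted | exact Hnu |].
    intros x Hx. apply Rmult_le_pos; [| apply pow2_ge_0].
    apply Rlt_le, Rinv_0_lt_compat, pow_lt, kp_pos. lra. }
  assert (HIB : 0 <= RInt (fun t => dr t ^ 2 / (Rabs (kp t * kpp t) + kp t ^ 2)) a nu).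
  { apply (RInt_ge_0_cont_on a b); [apply cont_on_dr_weighted | exact Hnu |].
    intros x Hx. apply Rmult_le_pos; [apply pow2_ge_0 |].
    apply Rlt_le, Rinv_0_lt_compat, weight_pos. lra. }
  set (IA := RInt (fun t => / kp t ^ 2 * r t ^ 2) a nu) in *.
  set (IB := RInt (fun t => dr t ^ 2 / (Rabs (kp t * kpp t) + kp t ^ 2)) a nu) in *.
  assert (Hexp : exp (2 * (nu - a)) <= exp (2 * b)) by (apply exp_le_compat; lra).
  pose proof (exp_pos (2 * (nu - a))).
  assert (HI1 : 0 <= / (kp nu ^ 2 * xi ^ 2) * r nu ^ 2)
    by (apply Rmult_le_pos; [apply Rlt_le, Rinv_0_lt_compat, Hq | apply pow2_ge_0]).
  assert (Hix : 0 < / xi ^ 2) by (apply Rinv_0_lt_compat, pow2_gt_0, Hxi).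
  assert (0 <= / xi ^ 2 * IA) by (apply Rmult_le_pos; lra).
  assert (0 <= / xi ^ 2 * IB) by (apply Rmult_le_pos; lra).
  nra.
Qed.

End EnergyEstimates.

Theorem lemma4p7 (nu_star : R) (Hstar : 0 < nu_star < nu_cr) :
  exists C : R, 0 < C /\
  forall (eps xi : R) (r dr h dh d2h : R -> R),
    0 < eps < nu_star ->
    C1_on eps nu_star r dr ->
    C2_on eps nu_star h dh d2h ->
    (forall x, eps <= x <= nu_star ->
       d2h x + kp x ^ 2 * xi ^ 2 * h x = r x) ->
    h eps = 0 -> dh eps = 0 ->
    forall nu, eps <= nu <= nu_star ->
      (xi <> 0 ->
        dh nu ^ 2 + kp nu ^ 2 * xi ^ 2 * h nu ^ 2
        <= C * ( / (kp nu ^ 2 * xi ^ 2) * r nu ^ 2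
               + / xi ^ 2 * RInt (fun t => / kp t ^ 2 * r t ^ 2) eps nu
               + / xi ^ 2 * RInt (fun t => dr t ^ 2 /
                     (Rabs (kp t * kpp t) + kp t ^ 2)) eps nu)) /\
      dh nu ^ 2 + kp nu ^ 2 * xi ^ 2 * h nu ^ 2
        <= C * nu * RInt (fun t => r t ^ 2) eps nu.
Proof.
  assert (He : 1 <= exp (2 * nu_star)) by (rewrite <- exp_0; apply exp_le_compat; lra).
  exists (8 * exp (2 * nu_star) + 4). split; [lra |].
  intros eps xi r dr h dh d2h Heps Hr Hh Hode Hh0 Hdh0 nu Hnu.
  assert (Ha : 0 < eps) by lra. assert (Hab : eps <= nu_star) by lra.
  destruct Hstar as [_ Hb]. split.
  - intros Hxi. exact (energy_estimate_weighted eps nu_star xi r dr h dh d2h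
                         Ha Hab Hb Hr Hh Hode Hh0 Hdh0 nu Hxi Hnu).
  - apply Rle_trans with (1 := energy_estimate_L2 eps nu_star xi r dr h dh d2h
                                Ha Hab Hb Hr Hh Hode Hh0 Hdh0 nu Hnu).
    assert (0 <= RInt (fun t => r t ^ 2) eps nu).
    { apply (RInt_ge_0_cont_on eps nu_star); [| lra | intros; apply pow2_ge_0].
      apply cont_on_sq, (cont_on_r eps nu_star r dr Hr). }
    rewrite !Rmult_assoc. apply Rmult_le_compat_r; [apply Rmult_le_pos; lra | lra].
Qed.
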